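(* Let $k$ be a field of characteristic two and let $\tau$ be a triangular involution of $k[x,y,z,w]$. Then there exists a $k$-algebra automorphism $\varphi$ of $k[x,y,z,w]$ such that $(\varphi^{-1}\circ\tau\circ\varphi)(x)=x$, $(\varphi^{-1}\circ\tau\circ\varphi)(y)=y+\phi_2'$, $(\varphi^{-1}\circ\tau\circ\varphi)(z)=z+\phi_3'$, $(\varphi^{-1}\circ\tau\circ\varphi)(w)=w+\phi_4'$, where $\phi_2'\in k[x]$, $\phi_3'\in k[x,y]$, $\phi_4'\in k[x,y,z]$, and $\phi_2',\phi_3'$ satisfy one of the following: (1) $\phi_2'=\phi_3'=0$; (2) $\phi_2'=0$ and $\phi_3'\neq 0$; (3) $\phi_2'\neq0$ and $\phi_3'\neq0$.
   Context: A $k$-algebra automorphism $\sigma$ of $k[x,y,z,w]$ is triangular if $\sigma(x)=\lambda_1x+\phi_1$, $\sigma(y)=\lambda_2y+\phi_2$, $\sigma(z)=\lambda_3z+\phi_3$, $\sigma(w)=\lambda_4w+\phi_4$ with $\lambda_i\in k\setminus\{0\}$, $\phi_1\in k$, $\phi_2\in k[x]$, $\phi_3\in k[x,y]$, $\phi_4\in k[x,y,z]$. An involution is an automorphism $\sigma$ with $\sigma^2=\mathrm{id}$. *)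

From mathcomp Require Import all_boot all_algebra.
From mathcomp Require Export mpoly.
Set Implicit Arguments. Unset Strict Implicit. Unset Printing Implicit Defensive.
Import GRing.Theory.
Local Open Scope ring_scope.

(* k[x,y,z,w] is {mpoly k[4]} with x = 'X_0, y = 'X_1, z = 'X_2, w = 'X_3. *)
Notation P4 k := {mpoly k[4]}.

Definition in_first_vars (k : fieldType) (j : nat) (p : P4 k) : Prop :=
  forall (m : 'X_{1..4}), m \in msupp p ->
    forall i : 'I_4, (j <= i)%N -> m i = 0%N.

Definition kalg_hom (k : fieldType) (f : P4 k -> P4 k) : Prop :=
  [/\ forall p q, f (p + q) = f p + f q,
      forall p q, f (p * q) = f p * f q,
      f 1 = 1 &
      forall (c : k) p, f (c *: p) = c *: f p].

Definition kalg_aut (k : fieldType) (f : P4 k -> P4 k) : Prop :=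
  kalg_hom f /\ bijective f.

Definition triangular (k : fieldType) (s : P4 k -> P4 k) : Prop :=
  kalg_aut s /\
  exists (l1 l2 l3 l4 : k) (c1 : k) (f2 f3 f4 : P4 k),
    [/\ [/\ l1 != 0, l2 != 0, l3 != 0 & l4 != 0],
        [/\ in_first_vars 1 f2, in_first_vars 2 f3 & in_first_vars 3 f4] &
        [/\ s 'X_0 = l1 *: 'X_0 + c1%:MP, s 'X_1 = l2 *: 'X_1 + f2,
            s 'X_2 = l3 *: 'X_2 + f3 & s 'X_3 = l4 *: 'X_3 + f4]].

Definition involution (k : fieldType) (s : P4 k -> P4 k) : Prop :=
  forall p, s (s p) = p.

(* In characteristic 2 an involutive triangular map has all diagonal
   coefficients equal to 1: from tau (tau X_i) = X_i one gets
   (1 - l^2) X_i = l q + tau q with the right-hand side in the earlier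
   variables, so l^2 = 1, i.e. l = 1; moreover tau q = -q = q.  If the
   translation c of x is nonzero, conjugate by x |-> y + c^-1 x f2(x), y |-> x:
   the image of x is tau-invariant because tau f2 = f2 and char k = 2, so the
   conjugate fixes x and translates y by c.  Finally, if the y-shift is nonzero
   but the z-shift vanishes, swapping y and z yields the remaining normal form. *)

From mathcomp Require Import all_boot all_algebra.
From mathcomp Require Import mpoly perm.
Set Implicit Arguments. Unset Strict Implicit. Unset Printing Implicit Defensive.
Import GRing.Theory.
Local Open Scope ring_scope.

Section Polynomials.
Variable k : fieldType.
Local Notation ifv := (@in_first_vars k).
Implicit Types (f g t : P4 k -> P4 k) (p q : P4 k).

Lemma ord4_cases (i : 'I_4) : [\/ i = 0, i = 1, i = 2 | i = 3].
Proof.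
case: i => [[|[|[|[|n]]]] hi] //;
  [apply: Or41 | apply: Or42 | apply: Or43 | apply: Or44]; exact: val_inj.
Qed.

Lemma in_first_vars0 j : ifv j 0.
Proof. by move=> m; rewrite mcoeff_msupp mcoeff0 eqxx. Qed.

Lemma in_first_varsD j p q : ifv j p -> ifv j q -> ifv j (p + q).
Proof. by move=> hp hq m /msuppD_le; rewrite mem_cat => /orP [/hp|/hq]. Qed.

Lemma in_first_varsZ j c p : ifv j p -> ifv j (c *: p).
Proof. by move=> hp m /msuppZ_le /hp. Qed.

Lemma in_first_varsN j p : ifv j p -> ifv j (- p).
Proof. by rewrite -scaleN1r; apply: in_first_varsZ. Qed.

Lemma in_first_varsM j p q : ifv j p -> ifv j q -> ifv j (p * q).
Proof.
move=> hp hq m /msuppM_le /allpairsP [[m1 m2] /= [h1 h2 ->]] i hi.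
by rewrite mnmDE (hp _ h1 i hi) (hq _ h2 i hi).
Qed.

Lemma in_first_varsC j c : ifv j c%:MP.
Proof.
move=> m; rewrite msuppC; case: eqP => _ //; rewrite inE => /eqP -> i _.
by rewrite mnm0E.
Qed.

Lemma in_first_vars1 j : ifv j 1.
Proof. by rewrite -mpolyC1; apply: in_first_varsC. Qed.

Lemma in_first_varsXn j p n : ifv j p -> ifv j (p ^+ n).
Proof.
move=> hp; elim: n => [|n ih]; first by rewrite expr0; apply: in_first_vars1.
by rewrite exprS; apply: in_first_varsM.
Qed.

Lemma in_first_varsX j (i : 'I_4) : (i < j)%N -> ifv j 'X_i.
Proof.
move=> lt_ij m; rewrite msuppX inE => /eqP -> i' le_ji'; rewrite mnm1E.
by case: eqP => // ii'; move: (leq_trans lt_ij le_ji'); rewrite ii' ltnn.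
Qed.

Lemma in_first_varsW j j' p : (j <= j')%N -> ifv j p -> ifv j' p.
Proof. by move=> le_jj' hp m hm i hi; apply: hp hm i (leq_trans le_jj' hi). Qed.

Lemma in_first_vars4 p : ifv 4 p.
Proof. by move=> m _ i hi; have := ltn_ord i; rewrite ltnNge hi. Qed.

Lemma in_first_vars_scaleX_eq0 (i : 'I_4) c : ifv i (c *: 'X_i) -> c = 0.
Proof.
move=> h; have [// | cN0] := eqVneq c 0.
have hm : mnm1 i \in msupp (c *: 'X_i : P4 k).
  by rewrite (perm_mem (msuppZ _ cN0)) msuppX mem_head.
by have := h _ hm i (leqnn _); rewrite mnm1E eqxx.
Qed.

Lemma kalg_hom0 f : kalg_hom f -> f 0 = 0.
Proof. by case=> _ _ _ fZ; rewrite -(scale0r (0 : P4 k)) fZ !scale0r. Qed.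

Lemma kalg_homC f c : kalg_hom f -> f c%:MP = c%:MP.
Proof. by case=> _ _ f1 fZ; rewrite -alg_mpolyC fZ f1. Qed.

Lemma kalg_homXn f p n : kalg_hom f -> f (p ^+ n) = f p ^+ n.
Proof.
case=> _ fM f1 _; elim: n => [|n ih]; first by rewrite !expr0 f1.
by rewrite !exprS fM ih.
Qed.

Lemma kalg_hom_expand f p : kalg_hom f ->
  f p = \sum_(m <- msupp p) p@_m *: \prod_(i < 4) f 'X_i ^+ m i.
Proof.
move=> hf; have [fD fM f1 fZ] := hf.
rewrite {1}[p]mpolyE (big_morph f fD (kalg_hom0 hf)); apply: eq_bigr => m _.
rewrite fZ mpolyXE_id (big_morph f fM f1); congr (_ *: _).
by apply: eq_bigr => i _; apply: kalg_homXn.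
Qed.

Lemma eq_kalg_hom_first_vars f g j p : kalg_hom f -> kalg_hom g ->
  (forall i : 'I_4, (i < j)%N -> f 'X_i = g 'X_i) -> ifv j p -> f p = g p.
Proof.
move=> hf hg fg hp; rewrite (kalg_hom_expand _ hf) (kalg_hom_expand _ hg) !big_seq.
apply: eq_bigr => m hm; congr (_ *: _); apply: eq_bigr => i _.
by case: (ltnP i j) => hi; [rewrite fg | rewrite (hp m hm i hi) !expr0].
Qed.

Lemma eq_kalg_hom f g : kalg_hom f -> kalg_hom g ->
  (forall i : 'I_4, f 'X_i = g 'X_i) -> f =1 g.
Proof.
move=> hf hg fg p.
exact: (eq_kalg_hom_first_vars hf hg (fun i _ => fg i) (@in_first_vars4 p)).
Qed.

Lemma kalg_hom_first_vars f j p : kalg_hom f ->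
  (forall i : 'I_4, (i < j)%N -> ifv j (f 'X_i)) -> ifv j p -> ifv j (f p).
Proof.
move=> hf fX hp; rewrite (kalg_hom_expand _ hf) big_seq.
apply: (big_ind (ifv j)); [exact: in_first_vars0 | exact: in_first_varsD |].
move=> m hm; apply: in_first_varsZ.
apply: (big_ind (ifv j)); [exact: in_first_vars1 | exact: in_first_varsM |].
move=> i _; case: (ltnP i j) => hi; first exact/in_first_varsXn/fX.
by rewrite (hp m hm i hi) expr0; apply: in_first_vars1.
Qed.

Lemma kalg_hom_id : kalg_hom (@id (P4 k)).
Proof. by []. Qed.

Lemma kalg_hom_comp f g : kalg_hom f -> kalg_hom g -> kalg_hom (f \o g).
Proof.
case=> fD fM f1 fZ [gD gM g1 gZ]; split=> /=.
- by move=> p q; rewrite gD fD.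
- by move=> p q; rewrite gM fM.
- by rewrite g1 f1.
- by move=> c p; rewrite gZ fZ.
Qed.

Lemma comp_mpoly_kalg_hom (lq : 4.-tuple (P4 k)) : kalg_hom (comp_mpoly lq).
Proof.
split; [exact: comp_mpolyD | by move=> p q; rewrite rmorphM |
        exact: comp_mpoly1 | by move=> c p; rewrite comp_mpolyZ].
Qed.

Lemma kalg_hom_cancel f g : kalg_hom f -> kalg_hom g ->
  (forall i : 'I_4, g (f 'X_i) = 'X_i) -> cancel f g.
Proof. by move=> hf hg gfX; apply: (eq_kalg_hom (kalg_hom_comp hg hf) kalg_hom_id). Qed.

Definition kalg_aut_pair f g :=
  [/\ kalg_hom f, kalg_hom g, cancel f g & cancel g f].

Lemma kalg_aut_pair_id : kalg_aut_pair id id.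
Proof. by split; first exact: kalg_hom_id. Qed.

Lemma kalg_aut_pair_comp f g f' g' :
  kalg_aut_pair f g -> kalg_aut_pair f' g' -> kalg_aut_pair (f \o f') (g' \o g).
Proof.
case=> hf hg fK gK [hf' hg' fK' gK']; split; try exact: kalg_hom_comp.
- by move=> p /=; rewrite fK fK'.
- by move=> p /=; rewrite gK' gK.
Qed.

Definition swapX (i j : 'I_4) : P4 k -> P4 k :=
  comp_mpoly [tuple 'X_(tperm i j l) | l < 4].

Lemma swapXX i j l : swapX i j 'X_l = 'X_(tperm i j l).
Proof. by rewrite /swapX comp_mpolyXU -tnth_nth tnth_mktuple. Qed.

Lemma swapX_aut_pair i j : kalg_aut_pair (swapX i j) (swapX i j).
Proof.
have hs := comp_mpoly_kalg_hom [tuple 'X_(tperm i j l) | l < 4].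
have sK : cancel (swapX i j) (swapX i j).
  by apply: kalg_hom_cancel => // l; rewrite !swapXX tpermK.
by split.
Qed.

Lemma swapX_first_vars (i j : 'I_4) n p :
  (i < n)%N -> (j < n)%N -> ifv n p -> ifv n (swapX i j p).
Proof.
move=> lt_in lt_jn; apply: kalg_hom_first_vars; first exact: comp_mpoly_kalg_hom.
by move=> l lt_ln; rewrite swapXX; apply: in_first_varsX; case: tpermP => // ->.
Qed.

Definition shearY (q : P4 k) : P4 k -> P4 k :=
  comp_mpoly [tuple 'X_0; 'X_1 + q; 'X_2; 'X_3].

Lemma shearYX q (l : 'I_4) : shearY q 'X_l = [:: 'X_0; 'X_1 + q; 'X_2; 'X_3]`_l.
Proof. exact: comp_mpolyXU. Qed.

Lemma shearY_kalg_hom q : kalg_hom (shearY q).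
Proof. exact: comp_mpoly_kalg_hom. Qed.

Lemma shearY_fix q p : ifv 1 p -> shearY q p = p.
Proof.
apply: (eq_kalg_hom_first_vars (shearY_kalg_hom q) kalg_hom_id).
by move=> i; case: (ord4_cases i) => -> // _; rewrite shearYX.
Qed.

Lemma shearY_aut_pair q : ifv 1 q -> kalg_aut_pair (shearY q) (shearY (- q)).
Proof.
move=> hq; have hNq := in_first_varsN hq.
have shearYK r : ifv 1 r -> cancel (shearY r) (shearY (- r)).
  move=> hr; apply: kalg_hom_cancel; try exact: shearY_kalg_hom.
  move=> i; case: (ord4_cases i) => ->; rewrite shearYX /= ?shearYX //.
  by rewrite /shearY comp_mpolyD comp_mpolyXU /= -/(shearY _ r) shearY_fix // addrNK.
split; try exact: shearY_kalg_hom; first exact: shearYK.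
by move=> p; rewrite -{1}(opprK q) shearYK.
Qed.

Lemma shearY_first_vars q n p : ifv 1 q -> ifv n p -> ifv n (shearY q p).
Proof.
move=> hq; apply: kalg_hom_first_vars; first exact: shearY_kalg_hom.
move=> i; rewrite shearYX; case: (ord4_cases i) => -> /= lt_in;
  try exact: in_first_varsX.
apply: in_first_varsD; first exact: (@in_first_varsX n 1).
exact: in_first_varsW (ltnW lt_in) hq.
Qed.

Definition shift_form t (g2 g3 g4 : P4 k) :=
  [/\ ifv 1 g2, ifv 2 g3, ifv 3 g4 &
      [/\ t 'X_0 = 'X_0, t 'X_1 = 'X_1 + g2, t 'X_2 = 'X_2 + g3 &
          t 'X_3 = 'X_3 + g4]].

Definition shift_trichotomy (g2 g3 : P4 k) :=
  [\/ g2 = 0 /\ g3 = 0, g2 = 0 /\ g3 != 0 | g2 != 0 /\ g3 != 0].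

Lemma shift_trichotomyVswap (g2 g3 : P4 k) :
  shift_trichotomy g2 g3 \/ g2 != 0 /\ g3 = 0.
Proof.
have [g20 | g2N0] := eqVneq g2 0; have [g30 | g3N0] := eqVneq g3 0; by [
  left; apply: Or31 | left; apply: Or32 | right | left; apply: Or33].
Qed.

Lemma normalize_yz t (g2 g3 g4 : P4 k) : shift_form t g2 g3 g4 ->
  exists phi phiinv (g2' g3' g4' : P4 k),
    [/\ kalg_aut_pair phi phiinv,
        shift_form (phiinv \o t \o phi) g2' g3' g4' & shift_trichotomy g2' g3'].
Proof.
move=> [h2 h3 h4 [e0 e1 e2 e3]].
have [trich | [g2N0 g30]] := shift_trichotomyVswap g2 g3.
  by exists id, id, g2, g3, g4; split; first exact: kalg_aut_pair_id.
have [hs _ _ _] := swapX_aut_pair 1 2.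
have [sD _ _ _] := hs.
have sg2 : swapX 1 2 g2 = g2.
  apply: (eq_kalg_hom_first_vars hs kalg_hom_id) h2.
  by move=> i; case: (ord4_cases i) => -> // _; rewrite swapXX tpermD.
exists (swapX 1 2), (swapX 1 2), 0, g2, (swapX 1 2 g4); split.
- exact: swapX_aut_pair.
- split; [exact: in_first_vars0 | exact: in_first_varsW h2 |
          exact: swapX_first_vars | split] => /=.
  + by rewrite swapXX tpermD // e0 swapXX tpermD.
  + by rewrite swapXX tpermL e2 g30 addr0 swapXX tpermR addr0.
  + by rewrite swapXX tpermR e1 sD swapXX tpermL sg2.
  + by rewrite swapXX tpermD // e3 sD swapXX tpermD.
- exact: Or32.
Qed.

Variable char2 : 2%N \in [pchar k].

Lemma mpoly_pchar2 : 2%N \in [pchar P4 k].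
Proof. exact: (rmorph_pchar (@mpolyC 4 k) char2). Qed.

Lemma involution_unipotent_var tau (i : 'I_4) l q :
  kalg_hom tau -> involution tau ->
  (forall j : 'I_4, ifv j.+1 (tau 'X_j)) ->
  tau 'X_i = l *: 'X_i + q -> ifv i q -> l = 1 /\ tau q = q.
Proof.
move=> htau tauK tri e hq; have [tD _ _ tZ] := htau.
have htq : ifv i (tau q).
  apply: kalg_hom_first_vars hq => // j lt_ji.
  exact: in_first_varsW lt_ji (tri j).
have e2 : (1 - l * l) *: 'X_i = l *: q + tau q.
  have := tauK 'X_i; rewrite {1}e tD tZ e scalerDr scalerA -addrA => e'.
  by rewrite scalerBl scale1r -{1}e' (addrC ((l * l) *: 'X_i)) addrK.
have l2 : 1 - l * l = 0.
  apply: (@in_first_vars_scaleX_eq0 i); rewrite e2.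
  by apply: in_first_varsD => //; apply: in_first_varsZ.
have l1 : l = 1.
  move/eqP: l2; rewrite subr_eq0 eq_sym -expr2 sqrf_eq1 (oppr_pchar2 char2).
  by rewrite orbb => /eqP.
split=> //; move: e2; rewrite l2 l1 scale0r scale1r => /esym/eqP.
by rewrite addr_eq0 (oppr_pchar2 mpoly_pchar2) => /eqP.
Qed.

Lemma normalize_x tau (c : k) (f2 f3 f4 : P4 k) : kalg_hom tau ->
  ifv 1 f2 -> ifv 2 f3 -> ifv 3 f4 ->
  tau 'X_0 = 'X_0 + c%:MP -> tau 'X_1 = 'X_1 + f2 ->
  tau 'X_2 = 'X_2 + f3 -> tau 'X_3 = 'X_3 + f4 -> tau f2 = f2 ->
  exists phi phiinv (g2 g3 g4 : P4 k),
    kalg_aut_pair phi phiinv /\ shift_form (phiinv \o tau \o phi) g2 g3 g4.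
Proof.
move=> htau h2 h3 h4 e0 e1 e2 e3 tf2; have [tD tM _ tZ] := htau.
have [c0 | cN0] := eqVneq c 0.
  exists id, id, f2, f3, f4; split; first exact: kalg_aut_pair_id.
  by split=> //; split=> //=; rewrite e0 c0 mpolyC0 addr0.
pose q := c^-1 *: ('X_0 * f2).
have hq : ifv 1 q.
  by apply/in_first_varsZ/in_first_varsM => //; apply: in_first_varsX.
pose phi := shearY q \o swapX 0 1.
pose phiinv := swapX 0 1 \o shearY (- q).
have pair : kalg_aut_pair phi phiinv.
  exact: kalg_aut_pair_comp (shearY_aut_pair hq) (swapX_aut_pair 0 1).
have [_ hinv phiK _] := pair; have [iD _ _ _] := hinv.
have phiX0 : phi 'X_0 = 'X_1 + q by rewrite /phi /= swapXX tpermL shearYX.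
have phiX1 : phi 'X_1 = 'X_0 by rewrite /phi /= swapXX tpermR shearYX.
have invX0 : phiinv 'X_0 = 'X_1 by rewrite /phiinv /= shearYX swapXX tpermL.
have fixX (i : 'I_4) : (1 < i)%N -> phi 'X_i = 'X_i /\ phiinv 'X_i = 'X_i.
  move=> lt1i; have swX : swapX 0 1 'X_i = 'X_i.
    by rewrite swapXX tpermD //; apply/eqP => ei; rewrite -ei in lt1i.
  have shX r : shearY r 'X_i = 'X_i.
    by rewrite shearYX; case: (ord4_cases i) lt1i => ->.
  by rewrite /phi /phiinv /comp swX !shX swX.
have invf (n : nat) p : (1 < n)%N -> ifv n p -> ifv n (phiinv p).
  move=> lt1n hp; apply: (@swapX_first_vars 0 1) (ltnW lt1n) lt1n _.
  exact: shearY_first_vars (in_first_varsN hq) hp.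
have tau_phiX0 : tau (phi 'X_0) = phi 'X_0.
  rewrite phiX0 tD tZ tM e0 e1 tf2 mulrDl scalerDr mul_mpolyC scalerA mulVf //.
  by rewrite scale1r -addrA (addrCA f2) (addrr_pchar2 mpoly_pchar2) addr0.
exists phi, phiinv, c%:MP, (phiinv f3), (phiinv f4); split; first exact: pair.
split; [exact: in_first_varsC | exact: invf | exact: invf | split] => /=.
- by rewrite tau_phiX0 phiK.
- by rewrite phiX1 e0 iD invX0 (kalg_homC _ hinv).
- by have [-> invX2] := fixX 2 isT; rewrite e2 iD invX2.
- by have [-> invX3] := fixX 3 isT; rewrite e3 iD invX3.
Qed.

End Polynomials.

Theorem lemma2 (k : fieldType) (char2 : 2%N \in [pchar k])
  (tau : {mpoly k[4]} -> {mpoly k[4]})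
  (Htri : triangular tau) (Hinv : involution tau) :
  exists (phi phiinv : {mpoly k[4]} -> {mpoly k[4]}),
    [/\ kalg_aut phi, cancel phi phiinv, cancel phiinv phi &
    exists (g2 g3 g4 : {mpoly k[4]}),
      [/\ in_first_vars 1 g2, in_first_vars 2 g3, in_first_vars 3 g4,
          [/\ phiinv (tau (phi 'X_0)) = 'X_0,
              phiinv (tau (phi 'X_1)) = 'X_1 + g2,
              phiinv (tau (phi 'X_2)) = 'X_2 + g3 &
              phiinv (tau (phi 'X_3)) = 'X_3 + g4] &
          [\/ g2 = 0 /\ g3 = 0, g2 = 0 /\ g3 != 0 | g2 != 0 /\ g3 != 0]]].
Proof.
case: Htri => [[htau _] [l1 [l2 [l3 [l4 [c [f2 [f3 [f4
  [_ [h2 h3 h4] [e0 e1 e2 e3]]]]]]]]]]].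
have tri (j : 'I_4) : in_first_vars j.+1 (tau 'X_j).
  case: (ord4_cases j) => ->; [rewrite e0 | rewrite e1 | rewrite e2 | rewrite e3];
    (apply: in_first_varsD; [exact/in_first_varsZ/in_first_varsX | ]);
    by [exact: in_first_varsC | exact: in_first_varsW h2 | exact: in_first_varsW h3 |
        exact: in_first_varsW h4].
have [l1E _] := involution_unipotent_var char2 htau Hinv tri e0 (@in_first_varsC k 0 c).
have [l2E tf2] := involution_unipotent_var char2 htau Hinv tri e1 h2.
have [l3E _] := involution_unipotent_var char2 htau Hinv tri e2 h3.
have [l4E _] := involution_unipotent_var char2 htau Hinv tri e3 h4.
rewrite l1E l2E l3E l4E !scale1r in e0 e1 e2 e3.
have [phi1 [inv1 [g2 [g3 [g4 [pair1 sf1]]]]]] :=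
  normalize_x char2 htau h2 h3 h4 e0 e1 e2 e3 tf2.
have [phi2 [inv2 [g2' [g3' [g4' [pair2 [j2 j3 j4 E] trich]]]]]] := normalize_yz sf1.
have [hphi _ phiK invK] := kalg_aut_pair_comp pair1 pair2.
exists (phi1 \o phi2), (inv2 \o inv1); split; [| exact: phiK | exact: invK |].
  by split; last exact: Bijective phiK invK.
by exists g2', g3', g4'.
Qed.
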